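(* Let $\Phi$ be a channel matrix whose rows $P^1,P^2,P^3\in\Delta^n$ are in general position, let $Q^0$ be the equidistant point from $P^1,P^2,P^3$ and $\boldsymbol\lambda^0$ its barycentric coordinate about $P^1,P^2,P^3$. If $\lambda^0_1,\lambda^0_2,\lambda^0_3\ge0$, then the output distribution achieving the channel capacity is $Q^\ast=Q^0$ and the channel capacity is $C=D(P^1\|Q^0)$.
   Context: $\Delta^n=\{Q:Q_j>0,\sum_jQ_j=1\}$, $\bar\Delta^m=\{\boldsymbol\lambda:\lambda_i\ge0,\sum_i\lambda_i=1\}$; $D(Q\|Q')=\sum_jQ_j\log(Q_j/Q'_j)$. Rows are in general position if $P^2-P^1,\dots,P^m-P^1$ are linearly independent. $L(S^1,\dots,S^r)=\{\sum_i\lambda_iS^i:\sum_i\lambda_i=1\}\cap\Delta^n$. The barycentric coordinate of $Q\in L(P^1,\dots,P^m)$ is the unique $\boldsymbol\lambda$ with $\sum_i\lambda_i=1$, $Q=\sum_i\lambda_iP^i$. The equidistant point is the unique $Q^0\in L(P^1,\dots,P^m)$ with $D(P^1\|Q^0)=\dots=D(P^m\|Q^0)$. Mutual information $I(\boldsymbol\lambda,\Phi)=\sum_{i,j}\lambda_iP^i_j\log(P^i_j/Q_j)$ with $Q=\boldsymbol\lambda\Phi$; capacity $C=\max_{\boldsymbol\lambda\in\bar\Delta^m}I(\boldsymbol\lambda,\Phi)$; the capacity-achieving output distribution is $Q^\ast=\boldsymbol\lambda^\ast\Phi$ for a maximizer $\boldsymbol\lambda^\ast$ (unique). *)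

From HB Require Import structures.
From mathcomp Require Import all_boot all_order all_algebra.
From mathcomp Require Import reals exp.
Set Implicit Arguments. Unset Strict Implicit. Unset Printing Implicit Defensive.
Import Order.TTheory GRing.Theory Num.Theory.
Local Open Scope ring_scope.

Section Defs.
Variable R : realType.

Definition in_open_simplex (n : nat) (Q : 'rV[R]_n) : Prop :=
  (forall j, 0 < Q 0 j) /\ \sum_j Q 0 j = 1.

Definition in_closed_simplex (m : nat) (l : 'rV[R]_m) : Prop :=
  (forall i, 0 <= l 0 i) /\ \sum_i l 0 i = 1.

Definition KL (n : nat) (Q Q' : 'rV[R]_n) : R :=
  \sum_j Q 0 j * ln (Q 0 j / Q' 0 j).

Definition channel_matrix (m n : nat) (Phi : 'M[R]_(m, n)) : Prop :=
  forall i, in_open_simplex (row i Phi).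

Definition general_position (m n : nat) (Phi : 'M[R]_(m.+1, n)) : Prop :=
  forall c : 'rV[R]_m,
    \sum_(i < m) c 0 i *: (row (lift ord0 i) Phi - row ord0 Phi) = 0 ->
    c = 0.

Definition affine_comb (m n : nat) (Phi : 'M[R]_(m, n)) (l : 'rV[R]_m)
  (Q : 'rV[R]_n) : Prop :=
  \sum_i l 0 i = 1 /\ Q = l *m Phi.

Definition in_affine_set (m n : nat) (Phi : 'M[R]_(m, n)) (Q : 'rV[R]_n) : Prop :=
  (exists l, affine_comb Phi l Q) /\ in_open_simplex Q.

Definition equidistant_prop (m n : nat) (Phi : 'M[R]_(m, n)) (Q : 'rV[R]_n) : Prop :=
  in_affine_set Phi Q /\ forall i i', KL (row i Phi) Q = KL (row i' Phi) Q.

Definition is_equidistant_point (m n : nat) (Phi : 'M[R]_(m, n)) (Q0 : 'rV[R]_n) : Prop :=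
  equidistant_prop Phi Q0 /\ forall Q, equidistant_prop Phi Q -> Q = Q0.

Definition is_barycentric (m n : nat) (Phi : 'M[R]_(m, n)) (Q : 'rV[R]_n)
  (l : 'rV[R]_m) : Prop :=
  affine_comb Phi l Q /\ forall l', affine_comb Phi l' Q -> l' = l.

Definition mutual_info (m n : nat) (l : 'rV[R]_m) (Phi : 'M[R]_(m, n)) : R :=
  \sum_i \sum_j l 0 i * Phi i j * ln (Phi i j / (l *m Phi) 0 j).

End Defs.

(* For every positive output distribution Q the mutual information splits as
   I(l, Phi) = sum_i l_i D(P^i || Q) - D(l Phi || Q).  At Q = Q0 equidistance
   collapses the first sum to D(P^1 || Q0), so I(l, Phi) <= D(P^1 || Q0) by
   Gibbs' inequality, with equality exactly when l Phi = Q0.  Nonnegative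
   barycentric coordinates make l0 an admissible input with l0 Phi = Q0, so the
   bound is attained. *)
From HB Require Import structures.
From mathcomp Require Import all_boot all_order all_algebra.
From mathcomp Require Import reals exp ring lra.
Set Implicit Arguments. Unset Strict Implicit. Unset Printing Implicit Defensive.
Import Order.TTheory GRing.Theory Num.Theory.
Local Open Scope ring_scope.

Section LnBounds.
Variable R : realType.
Implicit Types x : R.

Lemma ln_le_subr1 x : 0 < x -> ln x <= x - 1.
Proof.
move=> x_gt0; have := expR_ge1Dx (ln x).
by rewrite (lnK x_gt0) lerBrDl addrC.
Qed.

Lemma ln_eq_subr1 x : 0 < x -> ln x = x - 1 -> x = 1.
Proof.
move=> x_gt0 eq_ln; have [ln0|ln_neq0] := eqVneq (ln x) 0.
  by rewrite -(lnK x_gt0) ln0 expR0.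
have := expR_gt1Dx ln_neq0; rewrite (lnK x_gt0) eq_ln.
by rewrite addrC subrK ltxx.
Qed.

End LnBounds.

Section Gibbs.
Variables (R : realType) (n : nat) (Q Q' : 'rV[R]_n).
Hypotheses (Q_simplex : in_open_simplex Q) (Q'_simplex : in_open_simplex Q').

Let Q_gt0 j : 0 < Q 0 j. Proof. by case: Q_simplex. Qed.
Let Q'_gt0 j : 0 < Q' 0 j. Proof. by case: Q'_simplex. Qed.
Let ratio j := Q' 0 j / Q 0 j.
Let ratio_gt0 j : 0 < ratio j. Proof. exact: divr_gt0. Qed.

(* Both sides sum to 1, so sum_j Q_j (ratio_j - 1) vanishes and can be added. *)
Let KL_gap : KL Q Q' = \sum_j Q 0 j * (ratio j - 1 - ln (ratio j)).
Proof.
have [_ sumQ] := Q_simplex; have [_ sumQ'] := Q'_simplex.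
have sum_diff0 : \sum_j (Q' 0 j - Q 0 j) = 0 by rewrite sumrB sumQ sumQ' subrr.
rewrite /KL -[LHS]addr0 -[X in _ + X]sum_diff0 -big_split /=.
apply: eq_bigr => j _; rewrite /ratio !ln_div ?posrE //.
by field; rewrite gt_eqF.
Qed.

Let gap_ge0 j : 0 <= Q 0 j * (ratio j - 1 - ln (ratio j)).
Proof.
by rewrite mulr_ge0 ?(ltW (Q_gt0 j)) // subr_ge0 ln_le_subr1.
Qed.

Lemma KL_ge0 : 0 <= KL Q Q'.
Proof. by rewrite KL_gap sumr_ge0. Qed.

Lemma KL_eq0 : KL Q Q' = 0 -> Q = Q'.
Proof.
rewrite KL_gap => /psumr_eq0P gap0; apply/rowP => j.
have /eqP := gap0 (fun j _ => gap_ge0 j) j isT.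
rewrite mulf_eq0 gt_eqF //= subr_eq0 eq_sym => /eqP/(ln_eq_subr1 (ratio_gt0 j)).
by move/divr1_eq.
Qed.

End Gibbs.

Lemma KLxx (R : realType) n (Q : 'rV[R]_n) : KL Q Q = 0.
Proof.
rewrite /KL big1 // => j _.
by have [->|Qj_neq0] := eqVneq (Q 0 j) 0; rewrite ?mul0r // divff // ln1 mulr0.
Qed.

Section Channel.
Variables (R : realType) (m n : nat) (Phi : 'M[R]_(m, n)).
Hypothesis Phi_channel : channel_matrix Phi.

Lemma channel_gt0 i j : 0 < Phi i j.
Proof. by have [Pi_gt0 _] := Phi_channel i; have := Pi_gt0 j; rewrite mxE. Qed.

Lemma output_in_open_simplex l :
  in_closed_simplex l -> in_open_simplex (l *m Phi).
Proof.
move=> [l_ge0 sum_l]; split => [j|].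
  have term_ge0 i : 0 <= l 0 i * Phi i j.
    exact: mulr_ge0 (l_ge0 i) (ltW (channel_gt0 i j)).
  rewrite mxE lt_def sumr_ge0 ?andbT //.
  apply: contra_neqN (oner_neq0 R) => /eqP/psumr_eq0P out0.
  rewrite -sum_l big1 // => i _.
  have /eqP := out0 (fun i _ => term_ge0 i) i isT.
  by rewrite mulf_eq0 (gt_eqF (channel_gt0 i j)) orbF => /eqP.
under eq_bigr do rewrite mxE.
rewrite exchange_big /= -sum_l; apply: eq_bigr => i _.
have [_ sum_row] := Phi_channel i.
rewrite -mulr_sumr -[RHS]mulr1 -sum_row.
by congr (_ * _); apply: eq_bigr => j _; rewrite mxE.
Qed.

Lemma mutual_info_KL l (Q : 'rV[R]_n) :
  in_closed_simplex l -> (forall j, 0 < Q 0 j) ->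
  mutual_info l Phi = \sum_i l 0 i * KL (row i Phi) Q - KL (l *m Phi) Q.
Proof.
move=> l_simplex Q_gt0; have [out_gt0 _] := output_in_open_simplex l_simplex.
have -> : KL (l *m Phi) Q =
    \sum_i \sum_j l 0 i * Phi i j * ln ((l *m Phi) 0 j / Q 0 j).
  rewrite /KL exchange_big /=; apply: eq_bigr => j _.
  by rewrite -mulr_suml; congr (_ * _); rewrite mxE.
rewrite /mutual_info -sumrB; apply: eq_bigr => i _.
rewrite /KL mulr_sumr -sumrB; apply: eq_bigr => j _.
rewrite [row i Phi 0 j]mxE !ln_div ?posrE ?channel_gt0 //; ring.
Qed.

Lemma mutual_info_equidistant l (Q : 'rV[R]_n) d :
  in_closed_simplex l -> (forall j, 0 < Q 0 j) ->
  (forall i, KL (row i Phi) Q = d) ->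
  mutual_info l Phi = d - KL (l *m Phi) Q.
Proof.
move=> l_simplex Q_gt0 KL_d; rewrite (mutual_info_KL l_simplex Q_gt0).
under eq_bigr do rewrite KL_d.
by rewrite -mulr_suml (proj2 l_simplex) mul1r.
Qed.

End Channel.

Theorem theorem15 (R : realType) (n : nat) (Phi : 'M[R]_(3, n))
    (Q0 : 'rV[R]_n) (l0 : 'rV[R]_3) :
  channel_matrix Phi ->
  general_position Phi ->
  is_equidistant_point Phi Q0 ->
  is_barycentric Phi Q0 l0 ->
  (forall i, 0 <= l0 0 i) ->
  (* C = max_{l in closed simplex} I(l, Phi) = D(P^1 || Q0) *)
  ((forall l, in_closed_simplex l -> mutual_info l Phi <= KL (row 0 Phi) Q0) /\
   (exists l, in_closed_simplex l /\ mutual_info l Phi = KL (row 0 Phi) Q0)) /\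
  (* the capacity-achieving output distribution is Q* = Q0 *)
  (forall l, in_closed_simplex l -> mutual_info l Phi = KL (row 0 Phi) Q0 ->
     l *m Phi = Q0).
Proof.
move=> Phi_channel _ [[[_ Q0_simplex] KL_eq] _] [[sum_l0 l0_Q0] _] l0_ge0.
have [Q0_gt0 _] := Q0_simplex.
have I_gap l : in_closed_simplex l ->
    mutual_info l Phi = KL (row 0 Phi) Q0 - KL (l *m Phi) Q0.
  move=> l_simplex.
  exact: (mutual_info_equidistant Phi_channel l_simplex Q0_gt0 (KL_eq^~ 0)).
have out_simplex l : in_closed_simplex l -> in_open_simplex (l *m Phi).
  exact: output_in_open_simplex.
split; [split|].
- move=> l l_simplex; rewrite I_gap // gerBl.
  exact: KL_ge0 (out_simplex l l_simplex) Q0_simplex.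
- exists l0; split => //.
  by rewrite I_gap // -l0_Q0 KLxx subr0.
- move=> l l_simplex; rewrite I_gap // => I_eq.
  by apply: KL_eq0 (out_simplex l l_simplex) Q0_simplex _; lra.
Qed.
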